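(* Let $P=\mathrm{Syl}_2A_{2^k}$ be a Sylow $2$-subgroup of the alternating group $A_{2^k}$. Then $P'=P^2$ and $\Phi(P)=P'$.
   Context: $P'$ is the derived (commutator) subgroup of $P$, $P^2$ is the subgroup generated by all squares $g^2$, $g\in P$, and $\Phi(P)$ is the Frattini subgroup of $P$. *)

From mathcomp Require Import all_boot all_fingroup all_solvable.
Set Implicit Arguments. Unset Strict Implicit. Unset Printing Implicit Defensive.
Local Open Scope group_scope.

Definition squares_subgroup (gT : finGroupType) (P : {set gT}) : {set gT} :=
  <<[set x ^+ 2 | x in P]>>.

(* The Sylow 2-subgroups of Sym(2^k) are the automorphism groups T of the rooted binary
   tree of depth k: every element of T is a product t_(k-1) * ... * t_0, where t_l swaps
   the two subtrees below some of the vertices at depth l, so T has order 2^(2^k - 1),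
   the 2-part of (2^k)!.  For l < k - 1, t_l does not look at bit k - 1 of a leaf, so it
   is a product a * a^g where a is its restriction to the leaves whose bit k - 1 is 0 and
   g flips that bit; hence t_l is even.  An even element of T is thus t_(k-1) times a
   product of even involutions of T, so t_(k-1) is even too, and the Sylow 2-subgroup
   T :&: Alt of Alt(2^k) is generated by involutions.  Then P/P' is elementary abelian,
   i.e. every square of P lies in P', whence P' = P^2 and, P being a 2-group,
   Phi(P) = P' Mho^1(P) = P'. *)

From mathcomp Require Import all_boot all_fingroup all_solvable.
From mathcomp Require Import zify.
Set Implicit Arguments. Unset Strict Implicit. Unset Printing Implicit Defensive.

Section SquaresInDerivedSubgroup.
Local Open Scope group_scope.
Variable gT : finGroupType.
Implicit Types (G : {group gT}) (x y : gT).

Definition sqr_in_der1 (G : {set gT}) := {in G, forall x, x ^+ 2 \in G^`(1)}.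

Lemma expgM2 x y : (x * y) ^+ 2 = x ^+ 2 * [~ x, y^-1] * y ^+ 2.
Proof. by rewrite /commg /conjg !expgS expg0 !mulg1 invgK !mulgA mulgKV mulgK. Qed.

Lemma commg_expg2 x y : [~ x, y] = x^-1 ^+ 2 * (x * y^-1) ^+ 2 * y ^+ 2.
Proof. by rewrite /commg /conjg !expgS expg0 !mulg1 !mulgA !mulgKV. Qed.

Lemma sqr_in_der1_gen_invol G :
  G \subset <<[set s in G | s ^+ 2 == 1]>> -> sqr_in_der1 G.
Proof.
move=> sGI.
have sqG_group : group_set [set x in G | x ^+ 2 \in G^`(1)].
  apply/group_setP; split=> [|x y]; first by rewrite inE group1 expg1n group1.
  rewrite !inE => /andP[xG x2] /andP[yG y2].
  rewrite groupM // expgM2 groupM // groupM //.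
  by apply: mem_commg; rewrite ?groupV.
suff /subsetP sGsq : G \subset Group sqG_group by move=> x /sGsq; rewrite inE => /andP[].
apply: subset_trans sGI _; rewrite gen_subG; apply/subsetP => s.
by rewrite !inE => /andP[-> /eqP->]; rewrite group1.
Qed.

Lemma der1_squares_subgroup G : sqr_in_der1 G -> G^`(1) = squares_subgroup G.
Proof.
move=> sqG; apply/eqP; rewrite eqEsubset !gen_subG; apply/andP; split.
  have sq_mem x : x \in G -> x ^+ 2 \in <<[set y ^+ 2 | y in G]>>.
    by move=> xG; apply: mem_gen; apply: imset_f.
  apply/subsetP => _ /imset2P[x y xG yG ->].
  rewrite commg_expg2; apply: groupM; [apply: groupM|];
    by apply: sq_mem; rewrite ?groupM ?groupV.
by apply/subsetP => _ /imsetP[x xG ->]; apply: sqG.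
Qed.

Lemma Phi_der1_2group G : 2.-group G -> sqr_in_der1 G -> 'Phi(G) = G^`(1).
Proof.
move=> pG sqG; rewrite (Phi_joing pG) (MhoE 1 pG) expn1.
by apply/joing_idPl; rewrite gen_subG; apply/subsetP => _ /imsetP[x xG ->]; apply: sqG.
Qed.

Lemma sqr_in_der1J G z : sqr_in_der1 G -> sqr_in_der1 (G :^ z)%G.
Proof.
move=> sqG _ /imsetP[x xG ->]; rewrite /= derJ -conjXg.
by rewrite memJ_conjg sqG.
Qed.
End SquaresInDerivedSubgroup.

Section BinaryDigits.
Implicit Types i j l x y : nat.

Definition bit i x := odd (x %/ 2 ^ i).

Lemma expn2_gt0 i : 0 < 2 ^ i. Proof. by rewrite expn_gt0. Qed.

Lemma bit_ge_exp2 l x : bit l x -> 2 ^ l <= x.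
Proof. by rewrite /bit -divn_gt0 ?expn2_gt0 //; case: (x %/ 2 ^ l). Qed.

Lemma divnDX2_gt y l i : ~~ bit l y -> l < i -> (y + 2 ^ l) %/ 2 ^ i = y %/ 2 ^ i.
Proof.
move=> yl li; have -> : 2 ^ i = 2 ^ l * 2 * 2 ^ (i - l).-1.
  by rewrite -mulnA -expnS prednK ?subn_gt0 // -expnD subnKC // ltnW.
rewrite !divnMA divnDr // divnn expn2_gt0; congr (_ %/ _).
by move: yl; rewrite /bit; lia.
Qed.

Lemma bitDX2_le y l i : i <= l -> bit i (y + 2 ^ l) = (i == l) (+) bit i y.
Proof.
move=> il; have -> : 2 ^ l = 2 ^ (l - i) * 2 ^ i by rewrite -expnD subnK.
rewrite /bit divnDr ?dvdn_mull // mulnK ?expn2_gt0 // oddD oddX subn_eq0.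
by rewrite orbF eqn_leq il addbC.
Qed.

Lemma bitDX2 y l i : ~~ bit l y -> bit i (y + 2 ^ l) = (i == l) (+) bit i y.
Proof.
move=> yl; case: (ltnP l i) => [li | ]; last exact: bitDX2_le.
by rewrite /bit divnDX2_gt // gtn_eqF.
Qed.

Definition flipbit l x := if bit l x then x - 2 ^ l else x + 2 ^ l.

Lemma bit_flipbit l x i : bit i (flipbit l x) = (i == l) (+) bit i x.
Proof.
rewrite /flipbit; case: ifP => [xl | /negbT]; last exact: bitDX2.
have e : x = (x - 2 ^ l) + 2 ^ l by rewrite subnK // bit_ge_exp2.
have yl : ~~ bit l (x - 2 ^ l) by move: xl; rewrite {1}e bitDX2_le // eqxx; case: bit.
by rewrite {2}e bitDX2 // addbA addbb.
Qed.

Lemma flipbitK l : involutive (flipbit l).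
Proof.
move=> x; rewrite {1}/flipbit bit_flipbit eqxx /flipbit.
by case xl: (bit l x) => /=; rewrite ?addnK // subnK // bit_ge_exp2.
Qed.

Lemma flipbit_lt k l x : x < 2 ^ k -> l < k -> flipbit l x < 2 ^ k.
Proof.
move=> xk lk; rewrite /flipbit; case: ifP => [_ | /negbT xl].
  exact: leq_ltn_trans (leq_subr _ _) xk.
by rewrite -[2 ^ k]mul1n -ltn_divLR ?expn2_gt0 // divnDX2_gt // divn_small.
Qed.

Lemma modnX2S x j : x %% 2 ^ j.+1 = x %% 2 ^ j + bit j x * 2 ^ j.
Proof.
rewrite {1}(divn_eq x (2 ^ j)) {1}(divn_eq (x %/ 2 ^ j) 2) /bit -modn2.
rewrite mulnDl -mulnA -expnS -addnA modnMDl addnC modn_small // expnS.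
have : (x %/ 2 ^ j) %% 2 < 2 by rewrite ltn_pmod.
have := ltn_pmod x (expn2_gt0 j); move: (x %% 2 ^ j) ((x %/ 2 ^ j) %% 2) (2 ^ j).
move=> r a d; nia.
Qed.

Lemma eqn_modX2S x y j :
  (x %% 2 ^ j.+1 == y %% 2 ^ j.+1) = (x %% 2 ^ j == y %% 2 ^ j) && (bit j x == bit j y).
Proof.
have [e | ne] /= := eqVneq (x %% 2 ^ j) (y %% 2 ^ j).
  rewrite !modnX2S e eqn_add2l eqn_pmul2r ?expn2_gt0 //.
  by case: (bit j x); case: (bit j y).
apply: contra_neqF ne => /eqP e; have dvd_j : 2 ^ j %| 2 ^ j.+1 by rewrite dvdn_exp2l.
by rewrite -(modn_dvdm x dvd_j) e modn_dvdm.
Qed.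

Lemma eqn_modX2P x y j :
  reflect (forall i, i < j -> bit i x = bit i y) (x %% 2 ^ j == y %% 2 ^ j).
Proof.
elim: j => [|j IH]; first by rewrite !modn1; apply: ReflectT.
rewrite eqn_modX2S; apply: (iffP andP) => [[/IH eq_lt /eqP eq_j] i | eq_le].
  by rewrite ltnS leq_eqVlt => /predU1P[-> | /eq_lt].
by split; [apply/IH => i /ltnW/eq_le | rewrite eq_le].
Qed.

Lemma bits_inj k x y :
  x < 2 ^ k -> y < 2 ^ k -> (forall i, i < k -> bit i x = bit i y) -> x = y.
Proof. by move=> xk yk /eqn_modX2P; rewrite !modn_small // => /eqP. Qed.
End BinaryDigits.

Section BinaryTree.
Variable k : nat.
Implicit Types (l i j : nat) (x y : 'I_(2 ^ k)) (s : {perm 'I_(2 ^ k)}).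

Definition leaf_of n : 'I_(2 ^ k) := insubd (Ordinal (expn2_gt0 k)) n.

Lemma val_leaf_of n : n < 2 ^ k -> val (leaf_of n) = n.
Proof. by move=> nk; rewrite val_insubd nk. Qed.

Definition clearbit l n := if bit l n then flipbit l n else n.

Lemma clearbit_flipbit l n : clearbit l (flipbit l n) = clearbit l n.
Proof. by rewrite /clearbit bit_flipbit eqxx; case: (bit l n); rewrite /= ?flipbitK. Qed.

Lemma bit_clearbit l n i : i != l -> bit i (clearbit l n) = bit i n.
Proof. by move=> il; rewrite /clearbit; case: ifP; rewrite // bit_flipbit (negbTE il). Qed.

Lemma modn_clearbit l n : clearbit l n %% 2 ^ l = n %% 2 ^ l.
Proof. by apply/eqP/eqn_modX2P => i il; rewrite bit_clearbit // ltn_eqF. Qed.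

(* Testing p on [clearbit l x] rather than on x makes [condflip l p] an involution for
   every p. *)
Definition condflip_fun l (p : pred nat) x : 'I_(2 ^ k) :=
  if (l < k) && p (clearbit l x) then leaf_of (flipbit l x) else x.

Lemma condflip_funK l p : involutive (condflip_fun l p).
Proof.
move=> x; rewrite /condflip_fun; case: (ltnP l k) => //= lk.
case px: (p (clearbit l x)); last by rewrite px.
rewrite val_leaf_of ?flipbit_lt // clearbit_flipbit px.
by apply: val_inj; rewrite val_leaf_of flipbitK.
Qed.

Definition condflip l p : {perm 'I_(2 ^ k)} := perm (can_inj (condflip_funK l p)).

Lemma condflipK l p : (condflip l p * condflip l p = 1)%g.
Proof. by apply/permP => x; rewrite permM perm1 !permE condflip_funK. Qed.

Lemma bit_condflip l p x i : l < k ->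
  bit i (condflip l p x) = bit i x (+) ((i == l) && p (clearbit l x)).
Proof.
move=> lk; rewrite permE /condflip_fun lk /=; case: (p _); last by rewrite andbF addbF.
by rewrite val_leaf_of ?flipbit_lt // bit_flipbit andbT addbC.
Qed.

Lemma modn_condflip l p x j : l < k -> j <= l -> condflip l p x %% 2 ^ j = x %% 2 ^ j.
Proof.
move=> lk jl; apply/eqP/eqn_modX2P => i ij.
by rewrite bit_condflip // (ltn_eqF (leq_trans ij jl)) addbF.
Qed.

(* The leaves of the tree are the numbers below 2^k, read from the lowest bit: the vertices
   at depth j are the residues mod 2^j. *)
Definition tree_aut : {set {perm 'I_(2 ^ k)}} :=
  [set s : {perm 'I_(2 ^ k)} |
    [forall j : 'I_k.+1, forall x : 'I_(2 ^ k), forall y : 'I_(2 ^ k),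
       (x %% 2 ^ j == y %% 2 ^ j) == (s x %% 2 ^ j == s y %% 2 ^ j)]].

Lemma tree_autP s :
  reflect (forall x y j, j <= k -> (x %% 2 ^ j == y %% 2 ^ j) = (s x %% 2 ^ j == s y %% 2 ^ j))
          (s \in tree_aut).
Proof.
rewrite inE; apply: (iffP forallP) => [s_aut x y j jk | s_aut j].
  by have /forallP/(_ x)/forallP/(_ y)/eqP := s_aut (Ordinal (jk : j < k.+1)).
by apply/forallP => x; apply/forallP => y; rewrite s_aut // -ltnS.
Qed.

Lemma tree_aut_group_set : group_set tree_aut.
Proof.
apply/group_setP; split=> [|s t /tree_autP s_aut /tree_autP t_aut].
  by apply/tree_autP => x y j _; rewrite !perm1.
by apply/tree_autP => x y j jk; rewrite !permM s_aut // t_aut.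
Qed.

Canonical tree_aut_group := Group tree_aut_group_set.

Lemma involution_tree_aut s : (s * s = 1)%g ->
  (forall x y j, j <= k -> x %% 2 ^ j = y %% 2 ^ j -> s x %% 2 ^ j = s y %% 2 ^ j) ->
  s \in tree_aut.
Proof.
move=> ss s_hom; apply/tree_autP => x y j jk; apply/eqP/eqP; first exact: s_hom.
have ssK z : s (s z) = z by rewrite -permM ss perm1.
by move/(s_hom _ _ _ jk); rewrite !ssK.
Qed.

Definition subtree_swap l (c : pred nat) := condflip l (fun n => c (n %% 2 ^ l)).

Lemma bit_subtree_swap l c x i : l < k ->
  bit i (subtree_swap l c x) = bit i x (+) ((i == l) && c (x %% 2 ^ l)).
Proof. by move=> lk; rewrite bit_condflip // modn_clearbit. Qed.

Lemma subtree_swap_tree_aut l c : subtree_swap l c \in tree_aut.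
Proof.
apply: involution_tree_aut; first exact: condflipK.
case: (ltnP l k) => lk x y j jk; last by rewrite !permE /condflip_fun ltnNge lk.
move/eqP/eqn_modX2P => eq_j; apply/eqP/eqn_modX2P => i ij.
rewrite !bit_subtree_swap // eq_j //; case: eqP => // il.
by congr (_ (+) c _); apply/eqP/eqn_modX2P => i' i'l; rewrite eq_j // (ltn_trans i'l) // -il.
Qed.

Fixpoint subtree_swaps (c : nat -> pred nat) m : {perm 'I_(2 ^ k)} :=
  if m is l.+1 then (subtree_swap l (c l) * subtree_swaps c l)%g else 1%g.

Lemma bit_subtree_swaps c m x i : m <= k ->
  bit i (subtree_swaps c m x) = bit i x (+) ((i < m) && c i (x %% 2 ^ i)).
Proof.
elim: m x => [|m IH] x mk /=; first by rewrite perm1 addbF.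
rewrite permM IH ?(ltnW mk) // bit_subtree_swap // ltnS.
case: (ltngtP i m) => [im | mi | ->]; rewrite ?andbF ?addbF //=.
by rewrite /subtree_swap modn_condflip // ltnW.
Qed.

Lemma subtree_swaps_tree_aut c m : subtree_swaps c m \in tree_aut.
Proof. by elim: m => [|m IH] /=; rewrite ?group1 // groupM ?subtree_swap_tree_aut. Qed.

(* The internal vertex r < 2^l at depth l has index 2^l + r - 1 (heap numbering). *)
Definition labelling := {ffun 'I_(2 ^ k - 1) -> bool}.

Definition vertex_label (F : labelling) l r := oapp F false (insub (2 ^ l + r).-1).

Definition aut_of_labelling F := subtree_swaps (vertex_label F) k.

Definition labelling_of_aut s : labelling :=
  [ffun n : 'I_(2 ^ k - 1) => let l := trunc_log 2 n.+1 in let r := n.+1 - 2 ^ l in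
             bit l (s (leaf_of r)) (+) bit l r].

Lemma vertex_label_ord F l r (n : 'I_(2 ^ k - 1)) : (2 ^ l + r).-1 = n -> vertex_label F l r = F n.
Proof. by rewrite /vertex_label => ->; rewrite valK. Qed.

Lemma trunc_log_index n (l := trunc_log 2 n.+1) :
  n < 2 ^ k - 1 -> [/\ 2 ^ l <= n.+1, l < k & n.+1 - 2 ^ l < 2 ^ l].
Proof.
move=> nk; have [lb ub] := andP (trunc_log_bounds (isT : 1 < 2) (ltn0Sn n)).
split=> //; last by move: ub lb; rewrite -/l expnS; move: (2 ^ l) => d; lia.
rewrite -(ltn_exp2l _ _ (isT : 1 < 2)); apply: leq_ltn_trans lb _.
by rewrite ltn_subRL add1n in nk.
Qed.

Lemma aut_of_labellingK : cancel aut_of_labelling labelling_of_aut.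
Proof.
move=> F; apply/ffunP => n; rewrite ffunE /=.
have [lb lk rl] := trunc_log_index (ltn_ord n); set l := trunc_log 2 n.+1 in lb lk rl *.
have rk : n.+1 - 2 ^ l < 2 ^ k by apply: leq_trans rl _; rewrite leq_exp2l // ltnW.
rewrite bit_subtree_swaps // val_leaf_of // lk /= modn_small //.
by rewrite addbC addbA addbb (vertex_label_ord F (n := n)) // subnKC.
Qed.

Lemma vertex_label_of_aut s l r : l < k -> r < 2 ^ l ->
  vertex_label (labelling_of_aut s) l r = bit l (s (leaf_of r)) (+) bit l r.
Proof.
move=> lk rl; have lk2 : 2 ^ l.+1 <= 2 ^ k by rewrite leq_exp2l.
have index_lt : (2 ^ l + r).-1 < 2 ^ k - 1.
  by move: lk2 rl (expn2_gt0 l); rewrite expnS; move: (2 ^ l) (2 ^ k) => d K; lia.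
rewrite (vertex_label_ord _ (n := Ordinal index_lt)) // ffunE /=.
have -> : (2 ^ l + r).-1.+1 = 2 ^ l + r by rewrite prednK // addn_gt0 expn2_gt0.
have -> : trunc_log 2 (2 ^ l + r) = l.
  by apply: trunc_log_eq => //; rewrite leq_addr expnS mul2n -addnn ltn_add2l.
by rewrite addKn.
Qed.

Lemma labelling_of_autK s : s \in tree_aut -> aut_of_labelling (labelling_of_aut s) = s.
Proof.
move/tree_autP=> s_aut; apply/permP => x; apply: val_inj.
apply: (bits_inj (ltn_ord _) (ltn_ord _)) => i ik; rewrite bit_subtree_swaps // ik /=.
set r := x %% 2 ^ i; have ri : r < 2 ^ i by rewrite ltn_pmod ?expn2_gt0.
have rk : r < 2 ^ k by apply: leq_trans ri _; rewrite leq_exp2l // ltnW.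
rewrite vertex_label_of_aut //; set y := leaf_of r.
have xy : x %% 2 ^ i = y %% 2 ^ i by rewrite val_leaf_of // modn_mod.
have sxy : s x %% 2 ^ i = s y %% 2 ^ i by apply/eqP; rewrite -s_aut ?xy // ltnW.
have := s_aut x y i.+1 ik; rewrite !eqn_modX2S xy sxy !eqxx /= val_leaf_of //.
by case: (bit i x); case: (bit i r); case: (bit i (s x)); case: (bit i (s y)).
Qed.

Lemma tree_autE : tree_aut = aut_of_labelling @: [set: labelling].
Proof.
apply/setP => s; apply/idP/imsetP => [s_aut | [F _ ->]]; last exact: subtree_swaps_tree_aut.
by exists (labelling_of_aut s); rewrite ?inE ?labelling_of_autK.
Qed.

Lemma card_tree_aut : #|tree_aut| = 2 ^ (2 ^ k - 1).
Proof.
rewrite tree_autE card_imset; last exact: can_inj aut_of_labellingK.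
by rewrite cardsT card_ffun card_bool card_ord.
Qed.

End BinaryTree.

Lemma logn2_fact_exp2 k : logn 2 (2 ^ k)`! = 2 ^ k - 1.
Proof.
have sum_div n : \sum_(1 <= j < n.+1) 2 ^ n %/ 2 ^ j = 2 ^ n - 1.
  elim: n => [|n IH]; first by rewrite big_geq.
  rewrite big_nat_recl // expn1 expnS mulKn //.
  under eq_bigr do rewrite expnS divnMl //.
  by rewrite IH mul2n -addnn addnBA ?expn2_gt0.
rewrite logn_fact // (big_cat_nat _ (n := k.+1)) //=; last by rewrite ltnS ltnW // ltn_expl.
rewrite sum_div big1_seq ?addn0 // => j /andP[_]; rewrite mem_index_iota => /andP[kj _].
by rewrite divn_small // ltn_exp2l.
Qed.

Section TreeAlt.
Local Open Scope group_scope.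
Variable k : nat.

Lemma tree_aut_Sylow : 2.-Sylow([set: {perm 'I_(2 ^ k)}]) (tree_aut_group k).
Proof.
by rewrite pHallE subsetT /= cardsT card_Sn p_part logn2_fact_exp2 card_tree_aut.
Qed.

Lemma subtree_swap_Alt l c : l.+1 < k -> subtree_swap k l c \in 'Alt_('I_(2 ^ k)).
Proof.
move=> lk; have k_gt0 : 0 < k by apply: leq_trans lk.
set top := k.-1; have topk : top < k by rewrite prednK.
have ltop : l < top by rewrite -ltnS prednK.
have lk' : l < k := ltn_trans ltop topk.
have top_l : top != l by rewrite neq_ltn ltop orbT.
pose half b := condflip k l (fun n => c (n %% 2 ^ l) && (bit top n == b)).
pose g := condflip k top predT.
have swap_halves : subtree_swap k l c = half false * half true.
  apply/permP => x; apply: val_inj; apply: (bits_inj (ltn_ord _) (ltn_ord _)) => i ik.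
  rewrite permM /half /subtree_swap !bit_condflip // !modn_clearbit !bit_clearbit //.
  rewrite modn_condflip // bit_condflip // (negbTE top_l) /= addbF.
  by case: (i == l); case: (c _); case: (bit top x); case: (bit i x).
have g_inv : g^-1 = g by apply: (mulgI g); rewrite mulgV condflipK.
have half_conj : half true = half false ^ g.
  apply/permP => x; apply: val_inj; apply: (bits_inj (ltn_ord _) (ltn_ord _)) => i ik.
  rewrite /conjg g_inv !permM /half /g !bit_condflip // !modn_clearbit !bit_clearbit //.
  rewrite modn_condflip ?(ltnW ltop) // bit_condflip // eqxx /= andbT.
  by case: (i == l); case: (i == top); case: (c _); case: (bit top x); case: (bit i x).
by rewrite Alt_even swap_halves odd_permM half_conj odd_permJ addbb.
Qed.

Definition tree_alt := (tree_aut_group k :&: 'Alt_('I_(2 ^ k)))%G.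

Lemma subtree_swaps_Alt c m : m < k -> subtree_swaps k c m \in 'Alt_('I_(2 ^ k)).
Proof.
elim: m => [|m IH] mk /=; first exact: group1.
by rewrite groupM ?subtree_swap_Alt ?IH // ltnW.
Qed.

Lemma subtree_swaps_gen_invol c m : m <= k -> subtree_swaps k c m \in tree_alt ->
  subtree_swaps k c m \in <<[set s in tree_alt | s ^+ 2 == 1]>>.
Proof.
elim: m => [|m IH] mk /= swaps_alt; first exact: group1.
have rest_alt : subtree_swaps k c m \in tree_alt.
  by rewrite inE subtree_swaps_tree_aut subtree_swaps_Alt.
rewrite groupM ?IH ?(ltnW mk) //; apply: mem_gen.
rewrite inE expgS expg1 condflipK eqxx andbT.
by have := groupM swaps_alt (groupVr rest_alt); rewrite mulgK.
Qed.

Lemma tree_alt_gen_invol : tree_alt \subset <<[set s in tree_alt | s ^+ 2 == 1]>>.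
Proof.
apply/subsetP => s s_alt; have /setIP[s_aut _] := s_alt.
by rewrite -(labelling_of_autK s_aut) in s_alt *; apply: subtree_swaps_gen_invol.
Qed.

Lemma Sylow_Alt_tree_altJ (P : {group {perm 'I_(2 ^ k)}}) :
  2.-Sylow('Alt_('I_(2 ^ k))) P -> exists g, P :=: tree_alt :^ g.
Proof.
move=> sylP; have [g _ sPTg] := Sylow_subJ tree_aut_Sylow (subsetT P) (pHall_pgroup sylP).
have AltJ : 'Alt_('I_(2 ^ k)) :^ g = 'Alt_('I_(2 ^ k)).
  by apply/normP; rewrite (subsetP (normal_norm (Alt_normal _))) ?inE.
exists g; rewrite conjIg AltJ.
apply/esym; apply: (sub_pHall sylP _ _ (subsetIr _ _)).
  by apply: pgroupS (subsetIl _ _) _; rewrite pgroupJ (pHall_pgroup tree_aut_Sylow).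
by rewrite subsetI sPTg (pHall_sub sylP).
Qed.

End TreeAlt.

Local Open Scope group_scope.

Theorem mainTheorem18 (k : nat) (P : {group {perm 'I_(2 ^ k)}})
  (HP : 2.-Sylow('Alt_('I_(2 ^ k))) P) :
  P^`(1) = squares_subgroup P /\ 'Phi(P) = P^`(1).
Proof.
have sqP : sqr_in_der1 P.
  have [g ->] := Sylow_Alt_tree_altJ HP.
  exact: sqr_in_der1J (sqr_in_der1_gen_invol (tree_alt_gen_invol k)).
split; first exact: der1_squares_subgroup.
exact: Phi_der1_2group (pHall_pgroup HP) sqP.
Qed.
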